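(* Let $t > 0$. Let $(e,r)$ denote the element of $\mathcal{U}_t$ that is crossed last by $X$ during $[0,t]$, and let $p(e^+)$ denote the parent of $e^+$. Then, conditionally on $e^+\neq\phi$ and $H_{t,p(e^+)}<\infty$, almost surely $\mathcal{U}_t \setminus \mathcal{U}_{H_{t,p(e^+)}}$ contains at most two elements.
   Context: $G$ is an infinite rooted tree (root $\phi$) of uniformly bounded degree each of whose vertices has at least two offspring; the parent of a non-root vertex is its neighbour closer to $\phi$. For an edge $e$, $e^+$ is its endpoint closer to $\phi$ and $e^-$ the other. Fix $T>0$. A bar is $(e,h)\in E(G)\times[0,T)$ with joints $(e^+,h),(e^-,h)$. Under $\mathbb{P}_T$, $\mathcal{B}$ is a Poisson process of bars of intensity one w.r.t. counting $\times$ Lebesgue measure. The meander $X:[0,\infty)\to V(G)\times[0,T)$ starts at $(\phi,0)$, moves from $(v,h)$ as $t\mapsto(v,(h+t)\bmod T)$ until reaching a joint of a bar in $\mathcal{B}$, then jumps (crosses the bar) to the other joint and continues likewise; it is right-continuous with left limits. $Y$ is the projection of $X$ to $V(G)$. $H_A=\inf\{u\ge0:Y(u)\in A\}$, $H_{s,A}=\inf\{u\ge s:Y(u)\in A\}$ ($\inf\emptyset=\infty$), singletons written without braces. For $t>0$, $\mathcal{U}_t$ is the set of bars $(e,r)$ crossed by $X$ during $[0,t]$ such that: $H_{e^+}<H_{e^-}<t$; $\{u\in[0,t]:Y(u)=e^+\}=[H_{e^+},H_{e^-})$; $H_{e^-}-H_{e^+}\le T/2$; and $\{u\in[0,t):Y(u)=e^-\}$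 is an interval with right endpoint strictly less than $t$. *)

From HB Require Import structures.
From mathcomp Require Import all_boot all_order all_algebra.
From mathcomp Require Import all_classical all_reals all_analysis.
Set Implicit Arguments. Unset Strict Implicit. Unset Printing Implicit Defensive.
Import Order.TTheory GRing.Theory Num.Theory.
Local Open Scope classical_set_scope.
Local Open Scope ring_scope.

Section Meander.
Variables (R : realType) (V : choiceType) (root : V) (par : V -> V) (T : R).

(* Rooted tree encoded by the parent map: edges are the non-root vertices
   e, with e^- = e and e^+ = par e. *)
Definition rooted_tree : Prop :=
  par root = root /\ forall v, exists n, iter n par v = root.

Definition children (v : V) : set V := [set w | w <> root /\ par w = v].

Definition bounded_degree : Prop :=
  exists D : nat, forall v, exists s : seq V, uniq s /\ [set` s] = children v /\ (size s <= D)%N.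

Definition two_offspring : Prop :=
  forall v, exists w1 w2, children v w1 /\ children v w2 /\ w1 <> w2.

Definition has_card (A : set R) (k : nat) : Prop :=
  exists s : seq R, uniq s /\ size s = k /\ [set` s] = A.

Definition pois (r : R) (k : nat) : R := r ^+ k / k`!%:R * expR (- r).

(* B : Omega -> set of bars (e, h), e a non-root vertex (the edge {e, par e}),
   h in [0,T); B is a Poisson process of intensity counting x Lebesgue. *)
Definition bar_PPP d (Omega : measurableType d) (P : probability Omega R)
  (B : Omega -> set (V * R)) : Prop :=
  (forall w e h, B w (e, h) -> e <> root /\ 0 <= h < T) /\
  forall (n : nat) (es : 'I_n -> V) (As : 'I_n -> set R),
    (forall i, es i <> root) ->
    (forall i, measurable (As i)) ->
    (forall i, As i `<=` [set h | 0 <= h < T]) ->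
    (forall i j, i != j -> es i = es j -> As i `&` As j = set0) ->
    forall ks : 'I_n -> nat,
      let E := \bigcap_(i in [set: 'I_n])
                 [set w | has_card [set h | As i h /\ B w (es i, h)] (ks i)] in
      measurable E /\
      P E = (\prod_(i < n) pois (fine (lebesgue_measure (As i))) (ks i))%:E.

Variable b : set (V * R).

Definition rmod (x : R) : R := x - T * (Num.floor (x / T))%:~R.

Definition joint (v : V) (h : R) : Prop :=
  (v <> root /\ b (v, h)) \/ (exists w, w <> root /\ par w = v /\ b (w, h)).

Definition other (v : V) (h : R) : V :=
  if `[< v <> root /\ b (v, h) >] then par v
  else xget root [set w | w <> root /\ par w = v /\ b (w, h)].

Definition is_next_wait (v : V) (h s : R) : Prop :=
  0 < s /\ joint v (rmod (h + s)) /\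
  forall s', 0 < s' < s -> ~ joint v (rmod (h + s')).

Definition next_wait (v : V) (h : R) : option R :=
  match pselect (exists s, is_next_wait v h s) with
  | left ex => Some (projT1 (cid ex))
  | right _ => None
  end.

(* states: (vertex, height, time) at the successive jumps *)
Definition step (st : V * R * R) : option (V * R * R) :=
  let: (v, h, tau) := st in
  match next_wait v h with
  | Some s => Some (other v (rmod (h + s)), rmod (h + s), tau + s)
  | None => None
  end.

Fixpoint chain (n : nat) : option (V * R * R) :=
  match n with
  | 0 => Some (root, 0, 0)
  | n.+1 => obind step (chain n)
  end.

(* X(u) : right-continuous meander *)
Definition X (u : R) : V * R :=
  xget (root, 0)
    [set p | exists n v h tau, chain n = Some (v, h, tau) /\ tau <= u /\
       (forall v' h' tau', chain n.+1 = Some (v', h', tau') -> u < tau') /\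
       p = (v, rmod (h + (u - tau)))].

Definition Y (u : R) : V := (X u).1.

Definition Hit (s : R) (A : set V) : \bar R :=
  ereal_inf [set u%:E | u in [set u | s <= u /\ A (Y u)]].

Definition cross_time (t : R) (e : V) (r tau : R) : Prop :=
  b (e, r) /\ tau <= t /\
  exists n v h tau0 v', chain n = Some (v, h, tau0) /\
    chain n.+1 = Some (v', r, tau) /\
    ((v = e /\ v' = par e) \/ (v = par e /\ v' = e)).

Definition is_interval (I : set R) : Prop :=
  forall x y z, I x -> I z -> x <= y <= z -> I y.

Definition U (t : R) : set (V * R) :=
  [set er | let e := er.1 in let r := er.2 in
    (exists tau, cross_time t e r tau) /\
    (Hit 0 [set par e] < Hit 0 [set e] < t%:E)%E /\
    [set u | 0 <= u <= t /\ Y u = par e] =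
      [set u | (Hit 0 [set par e] <= u%:E < Hit 0 [set e])%E] /\
    (Hit 0 [set e] - Hit 0 [set par e] <= (T / 2)%:E)%E /\
    (let I := [set u | 0 <= u < t /\ Y u = e] in is_interval I /\ sup I < t)].

Definition last_crossed (t : R) (e : V) (r : R) : Prop :=
  U t (e, r) /\ exists tau, cross_time t e r tau /\
    forall e' r' tau', U t (e', r') -> cross_time t e' r' tau' -> tau' <= tau.

End Meander.

From Pilot Require Import Defs.
From HB Require Import structures.
From mathcomp Require Import all_boot all_order all_algebra.
From mathcomp Require Import all_classical all_reals all_analysis.
From mathcomp Require Import lra.
Import Order.TTheory GRing.Theory Num.Theory.
Local Open Scope classical_set_scope.
Local Open Scope ring_scope.
Set Implicit Arguments. Unset Strict Implicit.

(* The inclusion is deterministic: it holds for every configuration of bars on non-root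
   edges, so the event is empty.  Bars are indexed by their lower endpoint.  After entering
   [e] from [par e] the walk moves down and may not revisit [par e] before [t], so at time
   [t] it is strictly below [par e]; until the hitting time [H] of [par (par e)] after [t]
   it therefore stays strictly below [par (par e)].  Any other bar [(f, r')] of [U t] was
   crossed before [(e, r)]; as the visits to [f] before [t] form an interval, the walk could
   not leave the subtree of [f] in between, so [f] is strictly above [e].  If [f] is neither
   [e] nor [par e], it is above [par (par e)], hence neither [f] nor [par f] is visited
   between [t] and [H], and the conditions defining [U] are the same at times [t] and [H].
   Finally each edge carries at most one bar of [U t]. *)

Section Tree.
Variables (V : choiceType) (root : V) (par : V -> V).
Hypothesis Htree : rooted_tree root par.

Definition strict_desc (w x : V) := exists2 k, (0 < k)%N & iter k par x = w.

Definition tree_adj (v v' : V) :=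
  (v <> root /\ v' = par v) \/ (v' <> root /\ par v' = v).

Lemma iter_par_root k : iter k par root = root.
Proof. by elim: k => //= k ->; case: Htree. Qed.

Lemma iter_par_cycle x j : (0 < j)%N -> iter j par x = x -> x = root.
Proof.
move=> j0 hj; case: Htree => _ /(_ x) [n hn].
have iter_jm m : iter (j * m) par x = x.
  by elim: m => [|m IH]; rewrite ?muln0 // mulnS iterD IH hj.
by rewrite -(iter_jm n) -(subnK (leq_pmull n j0)) iterD hn iter_par_root.
Qed.

Lemma par_neq x : x <> root -> par x <> x.
Proof. by move=> xr px; apply: xr; apply: (@iter_par_cycle x 1). Qed.

Lemma strict_desc_root x : strict_desc root x.
Proof.
case: Htree => pr /(_ x) [[|n] hn]; last by exists n.+1.
by exists 1%N => //; move: hn => /= ->.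
Qed.

Lemma strict_desc_par w x : strict_desc w x -> w = par x \/ strict_desc w (par x).
Proof.
by case=> -[//|[|k]] _ hk; [left|right; exists k.+1 => //]; rewrite -hk -?iterSr.
Qed.

Lemma strict_desc_of_par w x : strict_desc w (par x) -> strict_desc w x.
Proof. by case=> k k0 hk; exists k.+1 => //; rewrite iterSr. Qed.

Lemma strict_desc_anc f w y k : iter k par w = f -> strict_desc w y -> strict_desc f y.
Proof. by move=> hw [m m0 hm]; exists (k + m)%N; rewrite ?addn_gt0 ?m0 ?orbT // iterD hm. Qed.

Lemma strict_desc_neq f y : f <> root -> strict_desc f y -> y <> f /\ y <> par f.
Proof.
move=> fr [k k0 hk]; split=> eyf; apply: fr; subst y.
  exact: iter_par_cycle k0 hk.
by apply: (@iter_par_cycle f k.+1) => //; rewrite iterSr.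
Qed.

End Tree.

Lemma sup_ge_of_Ico_sub (R : realType) (I : set R) (a c : R) :
  a < c -> has_ubound I -> (forall u, a <= u < c -> I u) -> c <= sup I.
Proof.
move=> ac ubI acI; rewrite leNgt; apply/negP => supc.
have [asup|supa] := leP a (sup I).
  have Ix : I ((sup I + c) / 2) by apply: acI; apply/andP; split; lra.
  by have := ub_le_sup ubI Ix; lra.
have Ix : I ((a + c) / 2) by apply: acI; apply/andP; split; lra.
by have := ub_le_sup ubI Ix; lra.
Qed.

Section Walk.
Variables (R : realType) (V : choiceType) (root : V) (par : V -> V) (T : R).
Variable b : set (V * R).
Hypothesis Htree : rooted_tree root par.
Hypothesis bar_edge : forall e h, b (e, h) -> e <> root.

Local Notation chain := (chain root par T b).
Local Notation Y := (Y root par T b).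
Local Notation Hit := (Hit root par T b).
Local Notation U := (U root par T b).
Local Notation cross_time := (cross_time root par T b).
Local Notation strict_desc := (strict_desc par).

Lemma next_waitP v h s :
  next_wait root par T b v h = Some s -> is_next_wait root par T b v h s.
Proof. by rewrite /next_wait; case: pselect => // ex [<-]; exact: projT2 (cid ex). Qed.

Lemma other_adj v h : joint root par b v h -> tree_adj root par v (other root par b v h).
Proof.
move=> jvh; rewrite /other; case: asboolP => [[vr _]|nvb]; [by left|right].
have ex : exists w, [set w | w <> root /\ par w = v /\ b (w, h)] w.
  by case: jvh => [//|[w hw]]; exists w.
by have [? [? _]] := xgetPex root ex.
Qed.

Lemma chainS_inv n v' h' a' : chain n.+1 = Some (v', h', a') ->
  exists v h a, chain n = Some (v, h, a) /\ a < a' /\ tree_adj root par v v'.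
Proof.
rewrite /=; case: (chain n) => [[[v h] a]|] //=.
rewrite /step; case E: next_wait => [s|] // [<- _ <-].
have [s0 [jv _]] := next_waitP E.
by exists v, h, a; rewrite ltrDl; split; last split; last exact: other_adj.
Qed.

Lemma chain_defined_le m v h a n : chain m = Some (v, h, a) -> (n <= m)%N ->
  exists v' h' a', chain n = Some (v', h', a').
Proof.
elim: m v h a => [|m IH] v h a cm; first by rewrite leqn0 => /eqP ->; exists v, h, a.
rewrite leq_eqVlt => /orP [/eqP ->|]; first by exists v, h, a.
by have [v1 [h1 [a1 [c1 _]]]] := chainS_inv cm; apply: IH c1.
Qed.

Lemma chain_time_lt n m v h a v' h' a' : (n < m)%N ->
  chain n = Some (v, h, a) -> chain m = Some (v', h', a') -> a < a'.
Proof.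
elim: m v' h' a' => [|m IH] v' h' a' //; rewrite ltnS leq_eqVlt => nm cn cm.
have [v1 [h1 [a1 [c1 [lt1 _]]]]] := chainS_inv cm.
case/orP: nm => [/eqP en|nm]; last exact: lt_trans (IH _ _ _ nm cn c1) lt1.
by move: c1; rewrite -en cn => -[_ _ ->].
Qed.

Lemma chain_time_le n m v h a v' h' a' : (n <= m)%N ->
  chain n = Some (v, h, a) -> chain m = Some (v', h', a') -> a <= a'.
Proof.
rewrite leq_eqVlt => /orP [/eqP ->|nm] cn cm; first by move: cm; rewrite cn => -[_ _ ->].
exact/ltW/(chain_time_lt nm cn cm).
Qed.

Lemma chain_time_ge0 n v h a : chain n = Some (v, h, a) -> 0 <= a.
Proof.
case: n => [[_ _ <-] //|n cn].
exact/ltW/(@chain_time_lt 0 n.+1 root 0 0 _ _ _ _ (erefl _) cn).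
Qed.

Definition sojourn (u : R) (n : nat) (v : V) := exists h a,
  chain n = Some (v, h, a) /\ a <= u /\
  forall v' h' a', chain n.+1 = Some (v', h', a') -> u < a'.

Definition explodes (u : R) :=
  forall n, exists v h a, chain n = Some (v, h, a) /\ a <= u.

Lemma sojourn_Y u n v : sojourn u n v -> Y u = v.
Proof.
move=> [h [a [cn [au next]]]]; rewrite /Y /X.
rewrite (@xget_unique _ _ _ (v, rmod T (h + (u - a)))) //; first by exists n, v, h, a.
move=> _ [m [v2 [h2 [a2 [cm [a2u [next2 ->]]]]]]].
wlog nm : n m v h a v2 h2 a2 cn cm au a2u next next2 / (n <= m)%N => [hwlog|].
  by case: (leqP n m) => [|/ltnW] nm; [|symmetry]; apply: hwlog nm.
move: nm; rewrite leq_eqVlt => /orP [/eqP enm|lt_nm].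
  by move: cm; rewrite -enm cn => -[-> -> ->].
have [v3 [h3 [a3 c3]]] := chain_defined_le cm lt_nm.
have := lt_le_trans (next _ _ _ c3) (chain_time_le lt_nm c3 cm).
by rewrite ltNge a2u.
Qed.

Lemma Y_chain_time n v h a : chain n = Some (v, h, a) -> Y a = v.
Proof.
move=> cn; apply: (@sojourn_Y _ n); exists h, a; split => //; split => // ? ? ?.
exact: chain_time_lt (ltnSn n) cn.
Qed.

Lemma Y_explodes u : explodes u -> Y u = root.
Proof.
move=> ex; rewrite /Y /X xgetPN // => _ [n [v [h [a [_ [_ [next _]]]]]]].
have [v' [h' [a' [cn1 a'u]]]] := ex n.+1.
by have := lt_le_trans (next _ _ _ cn1) a'u; rewrite ltxx.
Qed.

Lemma explodes_le u u' : u <= u' -> explodes u -> explodes u'.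
Proof.
move=> uu' ex n; have [v [h [a [cn au]]]] := ex n.
by exists v, h, a; split => //; exact: le_trans au uu'.
Qed.

Lemma sojourn_or_explodes u : 0 <= u -> (exists n v, sojourn u n v) \/ explodes u.
Proof.
move=> u0; have [|no_sojourn] := pselect (exists n v, sojourn u n v); [by left|right].
elim=> [|n [v [h [a [cn au]]]]]; first by exists root, 0, 0.
case E: (chain n.+1) => [[[v' h'] a']|].
  have [a'u|ua'] := leP a' u; first by exists v', h', a'.
  exfalso; apply: no_sojourn; exists n, v, h, a; split=> //; split=> // ? ? ?.
  by rewrite E => -[_ _ <-].
by exfalso; apply: no_sojourn; exists n, v, h, a; split=> //; split=> // ? ? ?; rewrite E.
Qed.

Lemma sojourn_index_le u u' n v n' v' :
  u <= u' -> sojourn u n v -> sojourn u' n' v' -> (n <= n')%N.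
Proof.
move=> uu' [h [a [cn [au _]]]] [h' [a' [_ [_ next']]]].
rewrite leqNgt; apply/negP => n'n.
have [v2 [h2 [a2 c2]]] := chain_defined_le cn n'n.
have := lt_le_trans (next' _ _ _ c2) (chain_time_le n'n c2 cn).
by rewrite ltNge (le_trans au uu').
Qed.

Lemma chain_exit_below w m n vm hm am vn hn an : (m <= n)%N ->
  chain m = Some (vm, hm, am) -> strict_desc w vm ->
  chain n = Some (vn, hn, an) -> ~ strict_desc w vn ->
  exists j h a, (m < j <= n)%N /\ chain j = Some (w, h, a).
Proof.
move=> + cm wvm; elim: n vn hn an => [|n IH] vn hn an.
  by rewrite leqn0 => /eqP em; move: cm; rewrite em => -> [<- _ _].
rewrite leq_eqVlt => /orP [/eqP em|]; first by move: cm; rewrite em => -> [<- _ _].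
rewrite ltnS => mn cn1 wvn.
have [v [h [a [cn [_ adj]]]]] := chainS_inv cn1.
have [wv|wv] := pselect (strict_desc w v); last first.
  have [j [h' [a' [/andP [mj jn] cj]]]] := IH _ _ _ mn cn wv.
  by exists j, h', a'; rewrite mj (leq_trans jn).
case: adj => [[_ evn]|[_ pvn]].
  case: (strict_desc_par wv) => [wpv|wpv]; last by exfalso; apply: wvn; rewrite evn.
  by exists n.+1, hn, an; rewrite ltnS mn leqnn wpv -evn.
by exfalso; apply: wvn; apply: strict_desc_of_par; rewrite pvn.
Qed.

Lemma Y_exit_below w u0 u1 : 0 <= u0 -> u0 <= u1 ->
  strict_desc w (Y u0) -> ~ strict_desc w (Y u1) ->
  (exists2 u, u0 < u <= u1 & Y u = w) \/ explodes u1.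
Proof.
move=> u00 u01 wY0 wY1.
have [[n0 [v0 hold0]]|ex0] := sojourn_or_explodes u00; last by right; exact: explodes_le ex0.
have [[n1 [v1 hold1]]|ex1] := sojourn_or_explodes (le_trans u00 u01); last by right.
have n01 := sojourn_index_le u01 hold0 hold1.
rewrite (sojourn_Y hold0) in wY0; rewrite (sojourn_Y hold1) in wY1.
move: hold0 hold1 => [h0 [a0 [c0 [_ next0]]]] [h1 [a1 [c1 [a1u _]]]].
have [j [h [a [/andP [n0j jn1] cj]]]] := chain_exit_below n01 c0 wY0 c1 wY1.
left; exists a; last exact: Y_chain_time cj.
have [v2 [h2 [a2 c2]]] := chain_defined_le cj n0j.
rewrite (lt_le_trans (next0 _ _ _ c2) (chain_time_le n0j c2 cj)) /=.
exact: le_trans (chain_time_le jn1 cj c1) a1u.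
Qed.

Lemma Hit_ge s A : (s%:E <= Hit s A)%E.
Proof. by apply: le_ereal_inf_tmp => _ [u [su _] <-]; rewrite lee_fin. Qed.

Lemma Hit_le s A u : s <= u -> A (Y u) -> (Hit s A <= u%:E)%E.
Proof. by move=> su Au; apply: ereal_inf_lbound; exists u. Qed.

Lemma Hit_lt s A x : (Hit s A < x)%E -> exists u, s <= u /\ A (Y u) /\ (u%:E < x)%E.
Proof. by move=> /ereal_inf_lt [_ [u [su Au] <-] ux]; exists u. Qed.

(* The infimum is attained since the meander is right-continuous. *)
Lemma Y_Hit s A H : 0 <= s -> Hit s A = H%:E -> A (Y H).
Proof.
move=> s0 EH; have sH : s <= H by rewrite -lee_fin -EH Hit_ge.
have Hle u : s <= u -> A (Y u) -> H <= u by move=> su Au; rewrite -lee_fin -EH Hit_le.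
have [[n [v hold]]|exH] := sojourn_or_explodes (le_trans s0 sH); last first.
  have /Hit_lt [u [su [Au _]]] : (Hit s A < +oo)%E by rewrite EH ltry.
  by rewrite (Y_explodes exH) -(Y_explodes (explodes_le (Hle u su Au) exH)).
move: (hold) => [h [a [cn [aH next]]]]; rewrite (sojourn_Y hold).
pose x := if chain n.+1 is Some (_, _, a') then a'%:E else +oo%E.
have [u [su [Au ux]]] : exists u, s <= u /\ A (Y u) /\ (u%:E < x)%E.
  apply: Hit_lt; rewrite EH /x; case E: (chain n.+1) => [[[? ?] a']|]; last exact: ltry.
  by rewrite lte_fin (next _ _ _ E).
suff <- : Y u = v by [].
apply: (@sojourn_Y u n v); exists h, a; split=> //.
split; first exact: le_trans aH (Hle u su Au).
by move=> v' h' a' cn1; move: ux; rewrite /x cn1 lte_fin.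
Qed.

Definition visits_before (t : R) (v : V) := [set u | 0 <= u < t /\ Y u = v].

Lemma U_cross t f r : U t (f, r) -> exists tau, cross_time t f r tau.
Proof. by case. Qed.

Lemma U_Hit_lt t f r : U t (f, r) -> (Hit 0 [set f] < t%:E)%E.
Proof. by case=> _ [/andP []]. Qed.

Lemma U_visit_par t f r u : U t (f, r) -> 0 <= u <= t -> Y u = par f ->
  (u%:E < Hit 0 [set f])%E.
Proof.
case=> _ [_ [visits _]] ut Yu.
by have /= /andP [] : _ u := eq_ind _ (fun S => S u) (conj ut Yu) _ visits.
Qed.

Lemma U_visits_interval t f r : U t (f, r) -> Defs.is_interval (visits_before t f).
Proof. by case=> _ [_ [_ [_ []]]]. Qed.

Lemma U_visits_sup_lt t f r : U t (f, r) -> sup (visits_before t f) < t.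
Proof. by case=> _ [_ [_ [_ []]]]. Qed.

Lemma U_cross_entry t f r tau : U t (f, r) -> cross_time t f r tau ->
  exists n, chain n.+1 = Some (f, r, tau) /\ Hit 0 [set f] = tau%:E.
Proof.
move=> Uf [bf [taut [n [v [h [a0 [v' [cn [cn1 dir]]]]]]]]].
have a00 := chain_time_ge0 cn; have a0tau := chain_time_lt (ltnSn n) cn cn1.
have tau0 : 0 <= tau := le_trans a00 (ltW a0tau).
have a0t : 0 <= a0 <= t by rewrite a00 (le_trans (ltW a0tau)).
case: dir => [[ev ev']|[ev ev']]; subst v v';
  have Ya0 := Y_chain_time cn; have Ytau := Y_chain_time cn1.
  have := lt_le_trans (U_visit_par Uf _ Ytau) (Hit_le a00 Ya0).
  by rewrite tau0 taut lte_fin ltNge (ltW a0tau) => /(_ isT).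
exists n; split=> //.
apply/eqP; rewrite eq_le Hit_le //= leNgt; apply/negP => /Hit_lt [u [u0 [Yu]]].
rewrite lte_fin => utau; have [a0u|ua0] := leP a0 u.
  have Yu' : Y u = par f.
    apply: (@sojourn_Y u n); exists h, a0; split=> //; split=> // ? ? ?.
    by rewrite cn1 => -[_ _ <-].
  by apply: (par_neq Htree (bar_edge bf)); rewrite -Yu' Yu.
have := lt_le_trans (U_visit_par Uf a0t Ya0) (Hit_le u0 Yu).
by rewrite lte_fin ltNge (ltW ua0).
Qed.

Lemma U_bar_uniq t f r1 r2 : U t (f, r1) -> U t (f, r2) -> r1 = r2.
Proof.
move=> U1 U2; have [tau1 C1] := U_cross U1; have [tau2 C2] := U_cross U2.
have [n1 [c1 H1]] := U_cross_entry U1 C1.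
have [n2 [c2 H2]] := U_cross_entry U2 C2.
have e12 : tau1 = tau2 by move: H1; rewrite H2 => -[].
have [lt|lt|en] := ltngtP n1 n2; last by move: c2; rewrite -en c1 => -[].
  by have := chain_time_lt (lt : (n1.+1 < n2.+1)%N) c1 c2; rewrite e12 ltxx.
by have := chain_time_lt (lt : (n2.+1 < n1.+1)%N) c2 c1; rewrite e12 ltxx.
Qed.

Lemma U_leaves t f r tau : U t (f, r) -> Hit 0 [set f] = tau%:E ->
  exists2 u, tau <= u < t & Y u <> f.
Proof.
move=> Uf Htau; have taut : tau < t by rewrite -lte_fin -Htau (U_Hit_lt Uf).
apply: contrapT => stay.
have := U_visits_sup_lt Uf; apply/negP; rewrite -leNgt.
apply: sup_ge_of_Ico_sub taut _ _; first by exists t => u [/andP [_ /ltW]].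
move=> u /andP [tau_u ut]; split.
  by rewrite ut andbT (le_trans _ tau_u) // -lee_fin -Htau Hit_ge.
by apply: contrapT => Yu; apply: stay; exists u; rewrite ?tau_u.
Qed.

Lemma U_next_child t f r n tau : U t (f, r) -> chain n.+1 = Some (f, r, tau) ->
  Hit 0 [set f] = tau%:E ->
  exists c hc ac, chain n.+2 = Some (c, hc, ac) /\ par c = f /\ ac < t.
Proof.
move=> Uf cn1 Htau; have [u /andP [tau_u ut] Yu] := U_leaves Uf Htau.
have stays_f : (forall v' h' a', chain n.+2 = Some (v', h', a') -> u < a') -> False.
  by move=> next; apply: Yu; apply: (@sojourn_Y u n.+1); exists r, tau.
case E: (chain n.+2) => [[[c hc] ac]|]; last by exfalso; apply: stays_f => ? ? ?; rewrite E.
have [t_ac|ac_t] := leP t ac.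
  by exfalso; apply: stays_f => ? ? ?; rewrite E => -[_ _ <-]; apply: lt_le_trans ut t_ac.
have [v [h [a [+ [tau_ac adj]]]]] := chainS_inv E; rewrite cn1 => -[ev _ ea]; subst v a.
case: adj => [[_ ec]|[_ pc]]; last by exists c, hc, ac.
have ac0 : 0 <= ac <= t by rewrite (ltW ac_t) (le_trans (chain_time_ge0 cn1) (ltW tau_ac)).
have := U_visit_par Uf ac0 (etrans (Y_chain_time E) ec).
by rewrite Htau lte_fin ltNge (ltW tau_ac).
Qed.

Lemma Hit_not_explodes t A :
  (t%:E < Hit t A)%E -> (Hit t A < +oo)%E -> ~ explodes t.
Proof.
move=> tH /Hit_lt [u [tu [Au _]]] ext.
have Yt : A (Y t) by rewrite (Y_explodes ext) -(Y_explodes (explodes_le tu ext)).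
by have := lt_le_trans tH (Hit_le (lexx t) Yt); rewrite ltxx.
Qed.

Lemma Y_below_until_Hit w s u : 0 <= s -> strict_desc w (Y s) ->
  (Hit s [set w] < +oo)%E -> s <= u -> (u%:E < Hit s [set w])%E -> strict_desc w (Y u).
Proof.
move=> s0 wYs Hfin su uH; apply: contrapT => wYu.
have [[u' /andP [su' u'u] Yu']|exu] := Y_exit_below s0 su wYs wYu.
  have := lt_le_trans uH (@Hit_le s [set w] u' (ltW su') Yu').
  by rewrite lte_fin ltNge u'u.
have [v [sv [Yv vH]]] := Hit_lt Hfin.
have [uv|vu] := leP u v.
  by apply: wYu; rewrite -Yv (Y_explodes (explodes_le uv exu)); exact: strict_desc_root.
have := lt_le_trans uH (@Hit_le s [set w] v sv Yv).
by rewrite lte_fin ltNge (ltW vu).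
Qed.

Lemma U_Y_below_par t e r : U t (e, r) -> ~ explodes t -> strict_desc (par e) (Y t).
Proof.
move=> Ue noex; have [tau Ce] := U_cross Ue.
have [n [cn1 Htau]] := U_cross_entry Ue Ce.
have [c [hc [ac [cn2 [pc act]]]]] := U_next_child Ue cn1 Htau.
have t0 : 0 <= t := ltW (le_lt_trans (chain_time_ge0 cn2) act).
have [[m [v hold]]|//] := sojourn_or_explodes t0.
rewrite (sojourn_Y hold); move: hold => [h [a [cm [a_t next]]]].
have nm : (n.+2 <= m)%N.
  rewrite leqNgt; apply/negP => mn.
  have [v' [h' [a' cm1]]] := chain_defined_le cn2 mn.
  have := lt_trans (next _ _ _ cm1) (le_lt_trans (chain_time_le mn cm1 cn2) act).
  by rewrite ltxx.
have ec : strict_desc (par e) c by exists 2%N => //=; rewrite pc.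
apply: contrapT => out.
have [j [hj [aj [/andP [nj jm] cj]]]] := chain_exit_below nm cn2 ec cm out.
have aj0 : 0 <= aj <= t by rewrite (chain_time_ge0 cj) (le_trans (chain_time_le jm cj cm) a_t).
have := U_visit_par Ue aj0 (Y_chain_time cj).
by rewrite Htau lte_fin ltNge (ltW (chain_time_lt (ltnW nj) cn1 cj)).
Qed.

Lemma U_crossed_before_below t e r tau f r' tf :
  U t (e, r) -> cross_time t e r tau -> U t (f, r') -> cross_time t f r' tf ->
  tf <= tau -> f <> e -> strict_desc f e.
Proof.
move=> Ue Ce Uf Cf tf_tau fe; have fr := bar_edge Cf.1.
have [ne [ce1 He]] := U_cross_entry Ue Ce.
have [nf [cf1 Hf]] := U_cross_entry Uf Cf.
have nfe : (nf < ne)%N.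
  have [//|en|en] := ltngtP nf ne; last by move: cf1; rewrite en ce1 => -[/esym].
  by have := chain_time_lt (en : (ne.+1 < nf.+1)%N) ce1 cf1; rewrite ltNge tf_tau.
have [c [hc [ac [cf2 [pc act]]]]] := U_next_child Uf cf1 Hf.
apply: contrapT => out.
have [j [hj [aj [/andP [nj jn] cj]]]] :=
  chain_exit_below (nfe : (nf.+2 <= ne.+1)%N) cf2 (ex_intro2 _ _ 1%N isT pc) ce1 out.
have tau_t : tau < t by rewrite -lte_fin -He (U_Hit_lt Ue).
have tf_t : tf < t by rewrite -lte_fin -Hf (U_Hit_lt Uf).
have Itf : visits_before t f tf.
  by split; [rewrite (chain_time_ge0 cf1) tf_t | exact: Y_chain_time cf1].
have Iaj : visits_before t f aj.
  split; last exact: Y_chain_time cj.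
  by rewrite (chain_time_ge0 cj) (le_lt_trans (chain_time_le jn cj ce1)).
have [_ Yac] := U_visits_interval Uf Itf Iaj
  (introT andP (conj (chain_time_le (leqnSn _) cf1 cf2) (chain_time_le (ltnW nj) cf2 cj))).
by apply: (par_neq Htree fr); rewrite -{1}Yac (Y_chain_time cf2).
Qed.

Lemma U_extend t H f r : t <= H ->
  (forall u, t <= u < H -> Y u <> f /\ Y u <> par f) -> Y H <> par f ->
  U t (f, r) -> U H (f, r).
Proof.
move=> tH avoid YH; rewrite /U /= => -[[tf [bf [tft cross]]] [HAB [visits [Hl [Hi Hs]]]]].
have same_f : visits_before H f = visits_before t f.
  apply/seteqP; split => u [/andP [u0 uH] Yu]; split => //; rewrite u0 /=.
    by rewrite ltNge; apply/negP => tu; apply: (avoid u _).1 Yu; rewrite tu.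
  exact: lt_le_trans uH tH.
split; first by exists tf; split => //; split => //; exact: le_trans tft tH.
split; first by move: HAB => /andP [-> /lt_le_trans ->]; rewrite ?lee_fin.
split.
  rewrite -visits; apply/seteqP; split => u /= [/andP [u0 uH] Yu]; split => //; rewrite u0 /=.
    rewrite leNgt; apply/negP => tu; move: uH; rewrite le_eqVlt => /orP [/eqP uH|uH].
      by apply: YH; rewrite -uH.
    by apply: (avoid u _).2 Yu; rewrite (ltW tu).
  exact: le_trans uH tH.
split=> //; rewrite /= -/(visits_before H f) same_f.
by split => //; exact: lt_le_trans Hs tH.
Qed.

Lemma U_diff_Hit_grandparent t e r :
  last_crossed root par T b t e r -> (Hit t [set par (par e)] < +oo)%E ->
  exists a1 a2, forall x,
    (U t `\` U (fine (Hit t [set par (par e)]))) x -> x = a1 \/ x = a2.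
Proof.
move=> [Ue [tau [Ce last]]] Hfin; set pp := par (par e) in Hfin *.
have t0 : 0 <= t by rewrite -lee_fin (le_trans (Hit_ge 0 [set e]) (ltW (U_Hit_lt Ue))).
have [H EH] : exists H, Hit t [set pp] = H%:E.
  move: (Hit_ge t [set pp]) Hfin; case: (Hit t _) => [H| |] //; by exists H.
rewrite EH /=; have tH : t <= H by rewrite -lee_fin -EH Hit_ge.
have below u : t <= u < H -> strict_desc pp (Y u).
  move=> /andP [tu uH].
  have noex : ~ explodes t.
    by apply: Hit_not_explodes Hfin; rewrite EH lte_fin (le_lt_trans tu).
  have Yt : strict_desc pp (Y t).
    exact: (strict_desc_anc (erefl : iter 1 par (par e) = pp) (U_Y_below_par Ue noex)).
  by apply: Y_below_until_Hit t0 Yt Hfin tu _; rewrite EH lte_fin.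
have only_e_pe f r' : U t (f, r') -> ~ U H (f, r') -> f = e \/ f = par e.
  move=> Uf nUf; apply: contrapT => /not_orP [fe fpe]; apply: nUf.
  have [tf Cf] := U_cross Uf.
  have fr : f <> root := bar_edge Cf.1.
  have [k ppf] : exists k, iter k par pp = f.
    have fe_below := U_crossed_before_below Ue Ce Uf Cf (last _ _ _ Uf Cf) fe.
    case: (strict_desc_par fe_below) => // fp.
    by case: (strict_desc_par fp) => [->|[k _ hk]]; [exists 0%N|exists k].
  apply: U_extend tH _ _ Uf => [u uI|].
    exact: (strict_desc_neq Htree fr (strict_desc_anc ppf (below u uI))).
  rewrite (Y_Hit t0 EH) => pp_pf; apply: fr.
  by apply: (@iter_par_cycle _ _ _ Htree f k.+1) => //; rewrite iterSr -pp_pf.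
have [[r2 U2]|no_pe] := pselect (exists r2, U t (par e, r2)).
  exists (e, r), (par e, r2) => -[f r'] [Uf nUf].
  case: (only_e_pe f r' Uf nUf) => ef; subst f; [left|right].
    by rewrite (U_bar_uniq Uf Ue).
  by rewrite (U_bar_uniq Uf U2).
exists (e, r), (e, r) => -[f r'] [Uf nUf].
case: (only_e_pe f r' Uf nUf) => ef; subst f; first by left; rewrite (U_bar_uniq Uf Ue).
by case: no_pe; exists r'.
Qed.

End Walk.

Theorem lemma8 (R : realType) (V : choiceType) (root : V) (par : V -> V)
  (Htree : rooted_tree root par) (Hdeg : bounded_degree root par)
  (Hoff : two_offspring root par)
  (T : R) (HT : 0 < T)
  (d : measure_display) (Omega : measurableType d) (P : probability Omega R)
  (B : Omega -> set (V * R)) (HB : bar_PPP root T P B)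
  (t : R) (Ht : 0 < t) :
  P.-negligible
    [set w | exists (e : V) (r : R),
       last_crossed root par T (B w) t e r /\
       par e <> root /\
       (Hit root par T (B w) t [set par (par e)] < +oo)%E /\
       ~ (exists a1 a2 : V * R, forall x,
            (U root par T (B w) t `\` U root par T (B w) (fine (Hit root par T (B w) t [set par (par e)]))) x ->
            x = a1 \/ x = a2)].
Proof.
apply: (negligibleS _ (negligible_set0 P)) => w [e [r [lc [_ [Hfin not_two]]]]].
apply: not_two.
have bar_edge e' h : B w (e', h) -> e' <> root by move=> /(HB.1 w) [].
exact: (U_diff_Hit_grandparent Htree bar_edge lc Hfin).
Qed.
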